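(* Let $K$ be a field of characteristic $0$ with henselian valuation ring $A$, valuation $v$ and residue field of characteristic $p>0$, containing a primitive $p$-th root of unity $\zeta$; put $\mathfrak{z}=\zeta-1$. Let $L|K$ be a non-trivial defectless Kummer extension of degree $p$ and $h$ a best element. Then the ideal $\mathbb{I}'$ of $A$ generated by $\{p\frac{a-1}{h-1}: a\in A,\ a^ph \text{ is best}\}$ is contained in $\mathbb{I}=\{x\in K: v(x)\ge\frac{p-1}{p}v(\frac{\mathfrak{z}^p}{h-1})\}$.
   Context: $\mathfrak{A}$ is the set of $g\in K$ such that the solutions of $X^p=g$ generate $L$; $g\in\mathfrak{A}$ is best if $v(\mathfrak{z}^p/(g-1))=\inf_{g'\in\mathfrak{A}}v(\mathfrak{z}^p/(g'-1))$. Defectless means $p=ef$ with $e$ the ramification index and $f$ the residue degree of $L|K$. *)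

From HB Require Import structures.
From mathcomp Require Import all_boot all_order all_algebra all_field.
Set Implicit Arguments. Unset Strict Implicit. Unset Printing Implicit Defensive.
Import Order.TTheory GRing.Theory Num.Theory.
Local Open Scope ring_scope.

(* Valuations are represented (up to equivalence) by their valuation rings. *)
Definition is_valuation_ring (F : fieldType) (A : {pred F}) : Prop :=
  [/\ 1 \in A,
      (forall x y, x \in A -> y \in A -> x - y \in A),
      (forall x y, x \in A -> y \in A -> x * y \in A) &
      (forall x, x != 0 -> x \in A \/ x^-1 \in A)].

Definition in_max (F : fieldType) (A : {pred F}) (x : F) : Prop :=
  x \in A /\ (x != 0 -> x^-1 \notin A).

Definition is_unitA (F : fieldType) (A : {pred F}) (x : F) : Prop :=
  [/\ x \in A, x != 0 & x^-1 \in A].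

(* v(x) <= v(y) for the valuation v attached to A *)
Definition vle (F : fieldType) (A : {pred F}) (x y : F) : Prop :=
  y = 0 \/ (x != 0 /\ y / x \in A).

Definition henselian (F : fieldType) (A : {pred F}) : Prop :=
  forall f : {poly F}, f \is monic -> (forall i, f`_i \in A) ->
  forall a, a \in A -> in_max A f.[a] -> ~ in_max A (f^`()).[a] ->
  exists b, [/\ b \in A, root f b & in_max A (b - a)].

Definition kummer_gen (K : fieldType) (L : fieldExtType K) (p : nat) (g : K) : Prop :=
  exists alpha : L, alpha ^+ p = g%:A /\ (<<1; alpha>>%VS = fullv).

Definition best (K : fieldType) (L : fieldExtType K) (A : {pred K})
    (p : nat) (zeta g : K) : Prop :=
  kummer_gen L p g /\
  forall g', kummer_gen L p g' ->
    vle A ((zeta - 1) ^+ p / (g - 1)) ((zeta - 1) ^+ p / (g' - 1)).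

(* e is the ramification index (Gamma_L : Gamma_K), where B is the valuation
   ring of L extending A: u_0..u_{e-1} represent exactly the cosets. *)
Definition ram_index (K : fieldType) (L : fieldExtType K) (A : {pred K})
    (B : {pred L}) (e : nat) : Prop :=
  exists u : 'I_e -> L,
  [/\ (forall i, u i != 0),
      (forall y : L, y != 0 ->
         exists i, exists c : K, c != 0 /\ is_unitA B (y / (c%:A * u i))) &
      (forall i j (c : K), c != 0 -> is_unitA B (u i / (c%:A * u j)) -> i = j)].

(* f is the residue degree: b_0..b_{f-1} in B whose residues form a basis of
   the residue field of B over the residue field of A. *)
Definition res_degree (K : fieldType) (L : fieldExtType K) (A : {pred K})
    (B : {pred L}) (f : nat) : Prop :=
  exists b : 'I_f -> L,
  [/\ (forall i, b i \in B),
      (forall c : 'I_f -> K, (forall i, c i \in A) ->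
         in_max B (\sum_i (c i)%:A * b i) -> forall i, in_max A (c i)) &
      (forall y, y \in B -> exists c : 'I_f -> K,
         (forall i, c i \in A) /\ in_max B (y - \sum_i (c i)%:A * b i))].

Definition defectless (K : fieldType) (L : fieldExtType K) (A : {pred K})
    (B : {pred L}) (p : nat) : Prop :=
  exists e f : nat, [/\ (e * f)%N = p, ram_index A B e & res_degree A B f].

Definition in_Iprime (K : fieldType) (L : fieldExtType K) (A : {pred K})
    (p : nat) (zeta h x : K) : Prop :=
  exists n (c a : 'I_n -> K),
  [/\ (forall i, c i \in A), (forall i, a i \in A),
      (forall i, best L A p zeta (a i ^+ p * h)) &
      x = \sum_i c i * (p%:R * (a i - 1) / (h - 1))].

(* x in I  <=>  v(x) >= (p-1)/p v(z^p/(h-1))  <=>  p v(x) >= (p-1) v(z^p/(h-1)) *)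
Definition in_I (K : fieldType) (A : {pred K}) (p : nat) (zeta h x : K) : Prop :=
  vle A (((zeta - 1) ^+ p / (h - 1)) ^+ p.-1) (x ^+ p).

From HB Require Import structures.
From mathcomp Require Import all_boot all_order all_algebra all_field.
From mathcomp Require Import ring.
Import Order.TTheory GRing.Theory Num.Theory.
Local Open Scope ring_scope.
Set Implicit Arguments. Unset Strict Implicit.

(* Write v for the valuation and z = zeta - 1; the factorisation
   p = prod_(0<i<p) (1 - zeta^i) gives v(z^(p-1)) = v(p).  For any Kummer
   generator g, v(g - 1) <= v(z^p): otherwise Hensel's lemma finds a root b of
   ((1 + z X)^p - g) / z^p, and g = (1 + z b)^p would be a p-th power in K.
   Now let a^p h be best.  If v(a - 1) < v(z), the binomial expansion gives
   v(a^p - 1) = p v(a - 1), and if moreover p v(a - 1) < v(h - 1) then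
   v(a^p h - 1) < v(h - 1), against the maximality of v(h - 1); if
   v(a - 1) >= v(z) the bound v(h - 1) <= v(z^p) applies.  Either way
   v(h - 1) <= p v(a - 1), so each generator x = p (a - 1) / (h - 1) satisfies
   p v(x) >= p v(p) - (p - 1) v(h - 1) = (p - 1) v(z^p / (h - 1)), and the
   elements with this property form an ideal of A. *)

Lemma prim_root_prod_1_sub (R : fieldType) n (zeta : R) :
  n.-primitive_root zeta -> \prod_(1 <= i < n) (1 - zeta ^+ i) = n%:R.
Proof.
move=> zeta_prim; have X1_neq0 : ('X - 1 : {poly R}) != 0.
  by rewrite -polyC1 polyXsubC_eq0.
have := factor_Xn_sub_1 zeta_prim.
rewrite big_ltn ?(prim_order_gt0 zeta_prim) // expr0 subrX1 polyC1 => /(mulfI X1_neq0).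
move=> /(congr1 (horner^~ 1)); rewrite horner_prod horner_sum.
under [RHS]eq_bigr do rewrite horner_exp hornerX expr1n.
rewrite sumr_const card_ord => <-.
by apply: eq_bigr => i _; rewrite hornerXsubC.
Qed.

Lemma not_kummer_gen_exp (K : fieldType) (L : fieldExtType K) p (zeta c : K) :
  (1 < p)%N -> p.-primitive_root zeta -> \dim {:L} = p -> ~ kummer_gen L p (c ^+ p).
Proof.
move=> p_gt1 zeta_prim dimL [alpha [alpha_p gen_alpha]].
have p_gt0 := ltnW p_gt1.
suff /Fadjoin_idP : alpha \in (1%AS : {subfield L}).
  by rewrite gen_alpha => fullv1; move: p_gt1; rewrite -dimL fullv1 dimv1.
have [c0 | c0] := eqVneq c 0.
  move: alpha_p; rewrite c0 expr0n gtn_eqF // scale0r => /eqP.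
  by rewrite expf_eq0 p_gt0 => /eqP ->; rewrite mem0v.
have cA0 : c%:A != 0 :> L by rewrite scaler_eq0 oner_eq0 orbF.
have zetaL_prim : p.-primitive_root (zeta%:A : L).
  by rewrite (fmorph_primitive_root (in_alg L)).
have : (alpha / c%:A) ^+ p = 1.
  rewrite expr_div_n alpha_p -[c%:A ^+ p](rmorphXn (in_alg L)) divff //=.
  by rewrite scaler_eq0 oner_eq0 orbF expf_neq0.
case/(prim_rootP zetaL_prim) => i alpha_i.
have -> : alpha = in_alg L (c * zeta ^+ i).
  by rewrite rmorphM rmorphXn /= -alpha_i mulrC divfK.
by rewrite /= memvZ // mem1v.
Qed.

Section ValuationRing.
Variables (F : fieldType) (A : {pred F}).
Hypothesis hA : is_valuation_ring A.

Fact valuation_ring_subring_closed : subring_closed A.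
Proof. by case: hA. Qed.

HB.instance Definition _ :=
  GRing.isSubringClosed.Build F A valuation_ring_subring_closed.

Lemma memA_or_invA x : x != 0 -> x \in A \/ x^-1 \in A.
Proof. by case: hA => _ _ _; apply. Qed.

Lemma memA_root t n : (0 < n)%N -> t ^+ n \in A -> t \in A.
Proof.
move=> n_gt0 tnA; have [-> | t0] := eqVneq t 0; first exact: rpred0.
case: (memA_or_invA t0) => // tVA.
have -> : t = t ^+ n * t^-1 ^+ n.-1.
  by rewrite -{1}(prednK n_gt0) exprS -mulrA exprVn mulfV ?mulr1 ?expf_neq0.
by rewrite rpredM // rpredX.
Qed.

Local Notation vle := (vle A).

Definition vlt x y := ~ vle y x.

Lemma vlex0 x : vle x 0. Proof. by left. Qed.

Lemma vle0x y : vle 0 y -> y = 0.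
Proof. by case=> // -[]; rewrite eqxx. Qed.

Lemma vleE x y : x != 0 -> vle x y <-> y / x \in A.
Proof. by move=> x0; split=> [[->|[]//]|]; [rewrite mul0r rpred0 | right]. Qed.

Lemma vle_refl x : vle x x.
Proof.
by have [->|x0] := eqVneq x 0; [left | apply/vleE; rewrite ?divff ?rpred1].
Qed.

Lemma vle_trans y x z : vle x y -> vle y z -> vle x z.
Proof.
case=> [-> /vle0x -> | [x0 yxA]]; first exact: vlex0.
case=> [-> | [y0 zyA]]; first exact: vlex0.
apply/(vleE _ x0); suff -> : z / x = z / y * (y / x) by rewrite rpredM.
by rewrite mulrA divfK.
Qed.

Lemma vle_total x y : vle x y \/ vle y x.
Proof.
have [-> | x0] := eqVneq x 0; first by right; left.
have [-> | y0] := eqVneq y 0; first by left; left.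
have : y / x != 0 by rewrite mulf_neq0 ?invr_eq0.
by case/memA_or_invA; rewrite ?invf_div => ?; [left | right]; right.
Qed.

Lemma vle_dec x y : vle x y \/ ~ vle x y.
Proof.
have [-> | y0] := eqVneq y 0; first by left; left.
have [-> | x0] := eqVneq x 0; first by right => /vle0x /eqP; rewrite (negPf y0).
by have [yxA | /negP yxNA] := boolP (y / x \in A); [left | right]; rewrite vleE.
Qed.

Lemma vle1x c : vle 1 c <-> c \in A.
Proof. by rewrite vleE ?oner_neq0 // divr1. Qed.

Lemma vle_mulr x c : c \in A -> vle x (x * c).
Proof.
move=> cA; have [-> | x0] := eqVneq x 0; first by rewrite mul0r; left.
by apply/vleE; rewrite // mulrAC divff ?mul1r.
Qed.

Lemma vle_mul x y u w : vle x y -> vle u w -> vle (x * u) (y * w).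
Proof.
case=> [-> _ | [x0 yxA]]; first by rewrite mul0r; left.
case=> [-> | [u0 wuA]]; first by rewrite mulr0; left.
by apply/vleE; rewrite ?mulf_neq0 // invfM mulrACA rpredM.
Qed.

Lemma vle_mul2r x y c : c != 0 -> vle (x * c) (y * c) -> vle x y.
Proof.
move=> c0; have [-> | x0] := eqVneq x 0; first by rewrite mul0r => /vle0x /eqP;
  rewrite mulf_eq0 (negPf c0) orbF => /eqP ->; left.
by rewrite !vleE ?mulf_neq0 // invfM mulrACA divff ?mulr1.
Qed.

Lemma vleNr x y : vle x (- y) <-> vle x y.
Proof.
have [-> | x0] := eqVneq x 0.
  by split=> /vle0x /eqP; rewrite ?oppr_eq0 => /eqP ->; [left | rewrite oppr0; left].
by rewrite !vleE // mulNr rpredN.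
Qed.

Lemma vleNl x y : vle (- x) y <-> vle x y.
Proof.
have [-> | x0] := eqVneq x 0; first by rewrite oppr0.
by rewrite !vleE ?oppr_eq0 // invrN mulrN rpredN.
Qed.

Lemma vleD x y z : vle x y -> vle x z -> vle x (y + z).
Proof.
have [-> /vle0x -> /vle0x -> | x0] := eqVneq x 0; first by rewrite addr0; left.
by rewrite !vleE // mulrDl; apply: rpredD.
Qed.

Lemma vle_sum (I : Type) (r : seq I) (P : pred I) (f : I -> F) x :
  (forall i, P i -> vle x (f i)) -> vle x (\sum_(i <- r | P i) f i).
Proof. by move=> le_f; apply: big_ind => //; [exact: vlex0 | exact: vleD]. Qed.

Lemma vle_prod (I : Type) (r : seq I) (P : pred I) (f g : I -> F) :
  (forall i, P i -> vle (f i) (g i)) ->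
  vle (\prod_(i <- r | P i) f i) (\prod_(i <- r | P i) g i).
Proof. by move=> le_fg; apply: big_ind2 => //; [exact: vle_refl | exact: vle_mul]. Qed.

Lemma vle_exp x y n : vle x y -> vle (x ^+ n) (y ^+ n).
Proof.
move=> le_xy; elim: n => [|n IHn]; first by rewrite !expr0; apply: vle_refl.
by rewrite !exprS; apply: vle_mul.
Qed.

Lemma vle_expn2 x y n : (0 < n)%N -> vle (x ^+ n) (y ^+ n) <-> vle x y.
Proof.
move=> n_gt0; split; last exact: vle_exp.
have [-> | x0] := eqVneq x 0.
  by rewrite expr0n gtn_eqF // => /vle0x /eqP; rewrite expf_eq0 n_gt0 => /eqP ->; left.
by rewrite !vleE ?expf_neq0 // -expr_div_n; apply: memA_root.
Qed.

Lemma vle_div2l c x y : c != 0 -> x != 0 -> vle (c / y) (c / x) -> vle x y.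
Proof.
move=> c0 x0; have [-> | y0] := eqVneq y 0; first by left.
by rewrite !vleE ?mulf_neq0 ?invr_eq0 // invf_div mulrC mulrA divfK.
Qed.

Lemma vltW x y : vlt x y -> vle x y.
Proof. by rewrite /vlt; case: (vle_total x y). Qed.

Lemma vle_lt_trans y x z : vle x y -> vlt y z -> vlt x z.
Proof. by move=> le_xy lt_yz le_zx; apply/lt_yz/(vle_trans le_zx). Qed.

Lemma vlt_le_trans y x z : vlt x y -> vle y z -> vlt x z.
Proof. by move=> lt_xy le_yz le_zx; apply/lt_xy/(vle_trans le_yz). Qed.

Lemma vlt_mul2r x y c : c != 0 -> vlt x y -> vlt (x * c) (y * c).
Proof. by move=> c0 lt_xy /(vle_mul2r c0). Qed.

Lemma vlt_exp x y n : (0 < n)%N -> vlt x y -> vlt (x ^+ n) (y ^+ n).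
Proof. by move=> n_gt0 lt_xy /(vle_expn2 _ _ n_gt0). Qed.

Lemma vle_addl_lt x y : vlt x y -> vle (x + y) x.
Proof.
move=> lt_xy; case: (vle_total (x + y) y) => [le_y | le_x].
  have : vle (x + y) (y - (x + y)) by apply/vleD/vleNr/vle_refl.
  by rewrite opprD addrCA subrr addr0 => /vleNr.
by case: lt_xy; have := vleD le_x ((vleNr _ _).2 (vle_refl y)); rewrite addrK.
Qed.

Lemma in_maxE x : in_max A x <-> vlt 1 x.
Proof.
split=> [[_ xVNA] | lt_1x].
  by case=> [/eqP | [x0]]; rewrite ?oner_eq0 // div1r (negPf (xVNA x0)).
split; first exact/vle1x/vltW.
by move=> x0; apply/negP => xVA; apply: lt_1x; apply/vleE; rewrite ?div1r.
Qed.

Lemma vle_exprD c x y n : vle c (x ^+ n) -> vle c (y ^+ n) -> vle c ((x + y) ^+ n).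
Proof.
move=> le_x le_y; case: (vle_total x y) => [le_xy | le_yx].
  exact/(vle_trans le_x)/vle_exp/vleD/le_xy/vle_refl.
by rewrite addrC; apply/(vle_trans le_y)/vle_exp/vleD/le_yx/vle_refl.
Qed.

Lemma vle_exprMl c x y n : y \in A -> vle c (x ^+ n) -> vle c ((y * x) ^+ n).
Proof.
by move=> yA le_x; rewrite exprMn mulrC; apply/(vle_trans le_x)/vle_mulr/rpredX.
Qed.

Lemma vle_expr_sum (I : finType) c (a y : I -> F) n : (0 < n)%N ->
  (forall i, a i \in A) -> (forall i, vle c (y i ^+ n)) ->
  vle c ((\sum_i a i * y i) ^+ n).
Proof.
move=> n_gt0 aA le_y; apply: (big_ind (fun s => vle c (s ^+ n))).
- by rewrite expr0n gtn_eqF //; apply: vlex0.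
- by move=> s t; apply: vle_exprD.
- by move=> i _; apply: vle_exprMl.
Qed.

Lemma vle_subX1 x n : x \in A -> vle (x - 1) (x ^+ n - 1).
Proof. by move=> xA; rewrite subrX1; apply/vle_mulr/rpred_sum => i _; rewrite rpredX. Qed.

Lemma prim_root_memA n zeta : n.-primitive_root zeta -> zeta \in A.
Proof.
move=> zeta_prim; apply: (memA_root (prim_order_gt0 zeta_prim)).
by rewrite prim_expr_order ?rpred1.
Qed.

Lemma vle_prim_root_sub1 n zeta xi :
  n.-primitive_root zeta -> n.-primitive_root xi -> vle (zeta - 1) (xi - 1).
Proof.
move=> zeta_prim xi_prim.
have [k ->] := prim_rootP zeta_prim (prim_expr_order xi_prim).
exact/vle_subX1/(prim_root_memA zeta_prim).
Qed.

Section PrimeRootOfUnity.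
Variables (p : nat) (zeta : F).
Hypotheses (p_prime : prime p) (zeta_prim : p.-primitive_root zeta).
Local Notation z := (zeta - 1).

Lemma prim_root_sub1_neq0 : z != 0.
Proof.
rewrite subr_eq0 -[zeta]expr1 -(prim_order_dvd zeta_prim) dvdn1.
by rewrite eqn_leq leqNgt prime_gt1.
Qed.

Lemma expr_prim_root_sub1_neq0 n : z ^+ n != 0.
Proof. exact/expf_neq0/prim_root_sub1_neq0. Qed.

Lemma memA_prim_root_sub1 : z \in A.
Proof. by rewrite rpredB ?rpred1 ?(prim_root_memA zeta_prim). Qed.

Lemma vle_prim_root_sub1_p : vle (z ^+ p.-1) p%:R /\ vle p%:R (z ^+ p.-1).
Proof.
have -> : z ^+ p.-1 = \prod_(1 <= i < p) z by rewrite prodr_const_nat subn1.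
rewrite -(prim_root_prod_1_sub zeta_prim) !big_nat.
split; apply: vle_prod => i /andP[i_gt0 i_lt_p];
  have xi_prim : p.-primitive_root (zeta ^+ i) by
    rewrite prim_root_exp_coprime // coprime_sym prime_coprime // gtnNdvd.
- by apply/vleNr; rewrite opprB; apply: vle_prim_root_sub1 zeta_prim xi_prim.
- by apply/vleNl; rewrite opprB; apply: vle_prim_root_sub1 xi_prim zeta_prim.
Qed.

Lemma vle_expr_binomial i : (0 < i <= p)%N -> vle (z ^+ p) ('C(p, i)%:R * z ^+ i).
Proof.
case/andP => i_gt0; rewrite leq_eqVlt => /orP[/eqP -> | i_lt_p].
  by rewrite binn mul1r; apply: vle_refl.
have /dvdnP[m ->] : (p %| 'C(p, i))%N by apply: prime_dvd_bin; rewrite ?i_gt0.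
have -> : (m * p)%:R * z ^+ i = p%:R * z * (m%:R * z ^+ i.-1) :> F.
  by rewrite natrM -{1}(prednK i_gt0) exprS; ring.
have -> : z ^+ p = z ^+ p.-1 * z by rewrite -exprSr prednK ?prime_gt0.
apply: vle_trans (vle_mulr _ _).
  exact/vle_mul/vle_refl/(proj1 vle_prim_root_sub1_p).
by rewrite rpredM ?rpred_nat ?rpredX ?memA_prim_root_sub1.
Qed.

Definition kummer_poly (h : F) : {poly F} :=
  \poly_(i < p.+1) (('C(p, i)%:R * z ^+ i - (i == 0%N)%:R * h) / z ^+ p).

Lemma horner_kummer_poly h b : (kummer_poly h).[b] = ((1 + z * b) ^+ p - h) / z ^+ p.
Proof.
rewrite horner_poly (exprDn 1) big_ord_recl [in RHS]big_ord_recl /=.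
rewrite !expr0 bin0 subn0 !expr1n !mul1r !mulr1 mulr1n addrAC [RHS]mulrDl mulr_suml.
congr (_ + _); apply: eq_bigr => i _.
by rewrite mul0r subr0 expr1n mul1r exprMn -mulr_natl; ring.
Qed.

Lemma kummer_poly_monic h : kummer_poly h \is monic.
Proof.
have coef_p : ('C(p, p)%:R * z ^+ p - (p == 0%N)%:R * h) / z ^+ p = 1.
  by rewrite binn mul1r gtn_eqF ?prime_gt0 // mul0r subr0 divff ?expr_prim_root_sub1_neq0.
by rewrite monicE lead_coef_poly ?coef_p ?oner_neq0.
Qed.

Lemma kummer_poly_coef_memA h :
  vle (z ^+ p) (h - 1) -> forall i, (kummer_poly h)`_i \in A.
Proof.
move=> le_h i; rewrite coef_poly; case: ltnP => [i_le_p | _]; last exact: rpred0.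
apply/(vleE _ (expr_prim_root_sub1_neq0 p)); have [-> | i_neq0] := eqVneq i 0%N.
  by rewrite bin0 expr0 !mul1r -[1 - h]opprB; apply/vleNr.
by rewrite mul0r subr0; apply: vle_expr_binomial; rewrite lt0n i_neq0.
Qed.

Lemma kummer_poly_deriv0 h : (kummer_poly h)^`().[0] = p%:R / z ^+ p.-1.
Proof.
rewrite horner_coef0 coef_deriv coef_poly ltnS prime_gt0 //=.
rewrite bin1 expr1 mul0r subr0 mulr1n.
rewrite -[in z ^+ p](prednK (prime_gt0 p_prime)) exprSr invfM mulrACA.
by rewrite divff ?mulr1 ?prim_root_sub1_neq0.
Qed.

Lemma henselian_kummer_root h :
  henselian A -> vlt (z ^+ p) (h - 1) -> exists c, c ^+ p = h.
Proof.
move=> hensA lt_h; have zp0 := expr_prim_root_sub1_neq0 p.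
have f0_max : in_max A (kummer_poly h).[0].
  apply/in_maxE; rewrite horner_kummer_poly mulr0 addr0 expr1n -opprB mulNr /vlt vleNl.
  by have := vlt_mul2r (invr_neq0 zp0) lt_h; rewrite divff.
have f'0_unit : ~ in_max A (kummer_poly h)^`().[0].
  rewrite kummer_poly_deriv0 in_maxE; apply.
  apply: (vle_mul2r (expr_prim_root_sub1_neq0 p.-1)).
  by rewrite divfK ?mul1r ?expr_prim_root_sub1_neq0 //; case: vle_prim_root_sub1_p.
have [b [_ /rootP root_b _]] := hensA _ (kummer_poly_monic h)
  (kummer_poly_coef_memA (vltW lt_h)) 0 (rpred0 _) f0_max f'0_unit.
exists (1 + z * b); apply/eqP; rewrite -subr_eq0.
move: root_b; rewrite horner_kummer_poly => /eqP.
by rewrite mulf_eq0 invr_eq0 (negPf zp0) orbF.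
Qed.

Lemma kummer_gen_vle_sub1 (L : fieldExtType F) h :
  henselian A -> \dim {:L} = p -> kummer_gen L p h -> vle (h - 1) (z ^+ p).
Proof.
move=> hensA dimL gen_h; have [// | lt_h] := vle_dec (h - 1) (z ^+ p).
have [c cp] := henselian_kummer_root hensA lt_h.
have := @not_kummer_gen_exp _ L p zeta c (prime_gt1 p_prime) zeta_prim dimL.
by rewrite cp.
Qed.

Lemma vle_binomial_middle e :
  e \in A -> vle (p%:R * e) ((1 + e) ^+ p - 1 - e ^+ p).
Proof.
move=> eA; have [q Dp] : exists q, p = q.+1 by exists p.-1; rewrite prednK ?prime_gt0.
have q1_prime : prime q.+1 by rewrite -Dp.
rewrite Dp exprDn big_ord_recl big_ord_recr /= /bump /= !add1n.
rewrite !expr1n !mul1r expr0 bin0 binn !mulr1n.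
set S := \sum_(i < q) _.
have -> : 1 + (S + e ^+ q.+1) - 1 - e ^+ q.+1 = S by ring.
apply: vle_sum => i _; have i_lt : (0 < i.+1 < q.+1)%N by rewrite ltn0Sn ltnS ltn_ord.
have [m ->] := dvdnP (prime_dvd_bin q1_prime i_lt).
rewrite add1n expr1n mul1r exprS.
have -> : e * e ^+ i *+ (m * q.+1) = q.+1%:R * e * (m%:R * e ^+ i).
  by rewrite -mulr_natr natrM; ring.
by apply: vle_mulr; rewrite rpredM ?rpred_nat ?rpredX.
Qed.

Lemma vle_exp1D_sub1 e : e \in A -> vlt e z -> vle ((1 + e) ^+ p - 1) (e ^+ p).
Proof.
move=> eA lt_ez; have e_neq0 : e != 0 by apply: contraPneq lt_ez => -> /(_ (vlex0 z)).
have lt_ep : vlt (e ^+ p) (p%:R * e).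
  have -> : e ^+ p = e ^+ p.-1 * e by rewrite -exprSr prednK ?prime_gt0.
  apply: vlt_mul2r e_neq0 _; apply: vlt_le_trans (proj1 vle_prim_root_sub1_p).
  by apply: vlt_exp lt_ez; rewrite -ltnS prednK ?prime_gt0 ?prime_gt1.
have -> : (1 + e) ^+ p - 1 = e ^+ p + ((1 + e) ^+ p - 1 - e ^+ p).
  by rewrite [RHS]addrC subrK.
exact/vle_addl_lt/(vlt_le_trans lt_ep)/vle_binomial_middle.
Qed.

Lemma best_mul_exp_vle (L : fieldExtType F) h a :
  vle (h - 1) (z ^+ p) -> kummer_gen L p h -> a \in A ->
  best L A p zeta (a ^+ p * h) -> vle (h - 1) ((a - 1) ^+ p).
Proof.
move=> le_h gen_h aA [_ best_aph].
have zp0 := expr_prim_root_sub1_neq0 p.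
have h1_neq0 : h - 1 != 0.
  by apply: contraNneq zp0 => h1; move: le_h; rewrite h1 => /vle0x ->.
have le_aph := vle_div2l zp0 h1_neq0 (best_aph h gen_h).
have [// | lt_h] := vle_dec (h - 1) ((a - 1) ^+ p); exfalso.
(* Now v(a^p h - 1) = v((a^p - 1) h) <= v((a - 1)^p) < v(h - 1): a^p h would beat h. *)
have lt_az : vlt (a - 1) z.
  by move=> le_za; apply/lt_h/(vle_trans le_h)/vle_exp.
have le_h1 : vle h 1.
  have lt_1h : vlt 1 (h - 1).
    by apply: vle_lt_trans lt_h; apply/vle1x/rpredX/rpredB; rewrite ?rpred1.
  by have := vle_addl_lt lt_1h; rewrite addrC subrK.
have le_ap : vle (a ^+ p - 1) ((a - 1) ^+ p).
  by have := vle_exp1D_sub1 (rpredB aA (rpred1 _)) lt_az; rewrite [1 + _]addrC subrK.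
have le_U : vle ((a ^+ p - 1) * h) ((a - 1) ^+ p).
  by rewrite -[X in vle _ X]mulr1; apply: vle_mul.
apply/lt_h/(vle_trans le_aph).
have -> : a ^+ p * h - 1 = (a ^+ p - 1) * h + (h - 1) by rewrite mulrBl mul1r addrA subrK.
exact/(vle_trans _ le_U)/vle_addl_lt/(vle_lt_trans le_U).
Qed.

Lemma vle_Iprime_generator h a : vle (h - 1) ((a - 1) ^+ p) ->
  vle ((z ^+ p / (h - 1)) ^+ p.-1) ((p%:R * (a - 1) / (h - 1)) ^+ p).
Proof.
move=> le_ha; have p_gt0 := prime_gt0 p_prime.
have [-> | h1_neq0] := eqVneq (h - 1) 0.
  by rewrite invr0 !mulr0 [X in vle _ X]expr0n gtn_eqF //; left.
apply: (vle_mul2r (expf_neq0 p h1_neq0)).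
rewrite -exprMn divfK // [X in vle _ X]exprMn.
have -> : (z ^+ p / (h - 1)) ^+ p.-1 * (h - 1) ^+ p = (z ^+ p.-1) ^+ p * (h - 1).
  rewrite expr_div_n -exprM mulnC exprM -[in (h - 1) ^+ p](prednK p_gt0) exprSr.
  by rewrite mulrA divfK ?expf_neq0.
by apply: vle_mul => //; apply/vle_exp/(proj1 vle_prim_root_sub1_p).
Qed.

End PrimeRootOfUnity.

End ValuationRing.

Theorem corollary6p7 (K : fieldType) (L : fieldExtType K) (A : {pred K})
    (B : {pred L}) (p : nat) (zeta h : K) :
  [pchar K] =i pred0 ->
  is_valuation_ring A -> henselian A ->
  prime p -> in_max A (p%:R) ->
  p.-primitive_root zeta ->
  \dim {:L} = p -> (exists g, kummer_gen L p g) ->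
  is_valuation_ring B -> (forall x : K, (x%:A \in B) = (x \in A)) ->
  defectless A B p ->
  best L A p zeta h ->
  forall x : K, in_Iprime L A p zeta h x -> in_I A p zeta h x.
Proof.
move=> _ hA hensA p_prime _ zeta_prim dimL _ _ _ _ [gen_h _] x.
case=> n [c [a [cA aA best_a ->]]].
have le_h := kummer_gen_vle_sub1 hA p_prime zeta_prim hensA dimL gen_h.
apply: (vle_expr_sum hA (prime_gt0 p_prime) cA) => i.
apply: (vle_Iprime_generator hA p_prime zeta_prim).
exact: (best_mul_exp_vle hA p_prime zeta_prim le_h gen_h).
Qed.
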